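(* Let $d\ge404$ and $k$ an integer with $d/2+1<k\le d/2+\frac16\log d$. Then for every $x>1$, $$\frac{(x+1)f'(x)}{k}<\big(1+\eta(x)\big)f(x).$$
   Context: $f(x)=\binom dk^{-1}\sum_{i=0}^{d-k}\binom ki\binom{d-k}{i}x^{k-i}$ and $\eta(x)=\dfrac{2k-d}{d-k+\sqrt{(d-k)^2+d(2k-d)f(x)}}$; $\log$ is the natural logarithm. *)

From HB Require Import structures.
From mathcomp Require Import all_boot all_order all_algebra.
From mathcomp Require Import all_classical all_reals all_analysis.
Set Implicit Arguments. Unset Strict Implicit. Unset Printing Implicit Defensive.
Import Order.TTheory GRing.Theory Num.Theory.
Local Open Scope ring_scope.

Definition fdk {R : realType} (d k : nat) (x : R) : R :=
  ('C(d, k)%:R)^-1 *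
  \sum_(i < (d - k).+1) ('C(k, i)%:R * 'C(d - k, i)%:R * x ^+ (k - i)).

Definition etadk {R : realType} (d k : nat) (x : R) : R :=
  (2 * k%:R - d%:R) /
  ((d%:R - k%:R) + Num.sqrt ((d%:R - k%:R) ^+ 2 + d%:R * (2 * k%:R - d%:R) * fdk d k x)).

(* Write x = 1 + y.  By Vandermonde's identity f(1 + y) = sum_j c_j y^j with
   c_j = C(k,j) C(d-j,d-k) / C(d,k), and with T = 2k - d the claim is equivalent to
   G Q < k T f, where Q = d - k + sqrt((d-k)^2 + d T f) and
   G = (x+1) f'(x) - k f(x) = sum_j (k-j)(T-j)/(d-j) c_j y^j.
   - If y >= 8T/d, consecutive terms of G grow by a factor large enough, up to
     index 3T, that the negative terms (j > T) outweigh the positive ones: G <= 0.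
   - If y < 8T/d, then c_j <= C(k,j) (k/d)^j gives f <= exp(k^2 y/d) <= (6/5) e^(2T),
     and d >= e^(3T) (this is k <= d/2 + log d / 6) yields T(T-1) f < d - T.  Together
     with G <= (k/d)((T-1) f + 1) and sqrt((d-k)^2 + d T f) <= T f + d - k this gives
     G Q < k T f. *)

From HB Require Import structures.
From mathcomp Require Import all_boot all_order all_algebra.
From mathcomp Require Import all_classical all_reals all_analysis.
From mathcomp Require Import ring lra zify.
Import Order.TTheory GRing.Theory Num.Theory.

Lemma mul_bin_sub_swap k i n : 'C(k, i) * 'C(k - i, n) = 'C(k, n) * 'C(k - n, i).
Proof.
have [le_in_k|lt_k_in] := leqP (i + n) k; last first.
  have [le_ik|lt_ki] := leqP i k; last first.
    rewrite (@bin_small k i) // mul0n.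
    have [le_nk|lt_kn] := leqP n k; last by rewrite bin_small.
    by rewrite (@bin_small (k - n) i) ?muln0 //; lia.
  rewrite (@bin_small (k - i) n) ?muln0; last by lia.
  have [le_nk|lt_kn] := leqP n k; last by rewrite bin_small.
  by rewrite (@bin_small (k - n) i) ?muln0 //; lia.
have le_ik : i <= k by lia.
have le_nk : n <= k by lia.
have e : k - i - n = k - n - i by lia.
have facts_gt0 : 0 < i`! * n`! * (k - i - n)`! by rewrite !muln_gt0 !fact_gt0.
apply/eqP; rewrite -(eqn_pmul2r facts_gt0); apply/eqP.
have le_n_ki : n <= k - i by lia.
have le_i_kn : i <= k - n by lia.
have fact_ki := bin_fact le_ik; have fact_kn := bin_fact le_nk.
have fact_kin := bin_fact le_n_ki; have fact_kni := bin_fact le_i_kn.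
rewrite e in fact_kin *.
transitivity (k`!); first by rewrite -fact_ki -fact_kin; ring.
by rewrite -fact_kn -fact_kni; ring.
Qed.

Lemma Vandermonde_sub k m n :
  \sum_(i < m.+1) 'C(k, i) * 'C(m, i) * 'C(k - i, n) = 'C(k, n) * 'C(k + m - n, m).
Proof.
have [le_nk|lt_kn] := leqP n k; last first.
  rewrite (@bin_small k n) // mul0n big1 // => i _.
  by rewrite (@bin_small (k - i) n) ?muln0 //; lia.
transitivity (\sum_(i < m.+1) 'C(k, n) * ('C(k - n, i) * 'C(m, m - i))).
  apply: eq_bigr => i _; rewrite bin_sub; last by rewrite -ltnS.
  by rewrite mulnAC mul_bin_sub_swap mulnA mulnAC.
rewrite -big_distrr /= binomial.Vandermonde; congr (_ * 'C(_, _)); lia.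
Qed.

Local Open Scope ring_scope.

Lemma sumr_ord_widen (V : nmodType) (F : nat -> V) m n : (m <= n)%N ->
  (forall j, (m <= j)%N -> F j = 0) -> \sum_(j < m) F j = \sum_(j < n) F j.
Proof.
move=> le_mn F0; rewrite (big_ord_widen _ _ le_mn) big_mkcond /=.
by apply: eq_bigr => j _; case: ifPn => //; rewrite -leqNgt => /F0->.
Qed.

Lemma sum_exp1D_coef (R : comPzRingType) (y : R) N M (e : nat -> nat) (b : nat -> R) :
  (forall i, (i < M)%N -> (e i <= N)%N) ->
  \sum_(i < M) b i * (1 + y) ^+ e i =
  \sum_(j < N.+1) (\sum_(i < M) b i * 'C(e i, j)%:R) * y ^+ j.
Proof.
move=> le_eN.
transitivity (\sum_(i < M) \sum_(j < N.+1) b i * 'C(e i, j)%:R * y ^+ j).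
  apply: eq_bigr => i _; rewrite addrC exprD1n big_distrr /=.
  rewrite (@sumr_ord_widen _ (fun j => b i * (y ^+ j *+ 'C(e i, j))) (e i).+1 N.+1).
  - by apply: eq_bigr => j _; rewrite -mulr_natl mulrA.
  - by rewrite ltnS le_eN.
  - by move=> j lt_ej; rewrite bin_small // mulr0n mulr0.
rewrite exchange_big /=; apply: eq_bigr => j _; rewrite big_distrl /=.
by apply: eq_bigr.
Qed.

Section TaylorCoefficients.
Context {R : realType}.
Variables d k : nat.

Definition fcoef j : R := ('C(k, j) * 'C(d - j, d - k))%:R / 'C(d, k)%:R.

Lemma fcoef_ge0 j : 0 <= fcoef j.
Proof. by rewrite divr_ge0. Qed.

Lemma fcoef_small j : (k < j)%N -> fcoef j = 0.
Proof. by move=> lt_kj; rewrite /fcoef bin_small // mul0n mul0r. Qed.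

Hypothesis lt_kd : (k < d)%N.

Lemma fcoef0 : fcoef 0 = 1.
Proof.
rewrite /fcoef bin0 mul1n subn0 bin_sub ?divff //; last exact: ltnW.
by rewrite pnatr_eq0 -lt0n bin_gt0 ltnW.
Qed.

Lemma fcoef1_gt0 : (0 < k)%N -> 0 < fcoef 1.
Proof.
move=> k_gt0; rewrite /fcoef divr_gt0 // ltr0n; last by rewrite bin_gt0 ltnW.
by rewrite muln_gt0 !bin_gt0 k_gt0 leq_sub2l.
Qed.

Lemma fcoefS j : (j <= k)%N ->
  j.+1%:R * (d%:R - j%:R) * fcoef j.+1 = (k%:R - j%:R) ^+ 2 * fcoef j.
Proof.
move=> le_jk; rewrite /fcoef !mulrA -!natrB //; last by lia.
rewrite -!natrM -natrX -natrM; congr (_%:R / _).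
have left := mul_bin_left k j.
have down := mul_bin_down (d - j) (d - k).
have -> : (d - j.+1 = (d - j).-1)%N by lia.
have e : (d - j - (d - k) = k - j)%N by lia.
rewrite e in down.
transitivity ((j.+1 * 'C(k, j.+1)) * ((d - j) * 'C((d - j).-1, d - k)))%N; first by ring.
by rewrite left down; ring.
Qed.

End TaylorCoefficients.

Section TaylorExpansion.
Context {R : realType}.
Variables d k : nat.

Lemma fdk_shift (y : R) : (k <= d)%N ->
  fdk d k (1 + y) = \sum_(j < k.+1) fcoef d k j * y ^+ j.
Proof.
move=> le_kd; rewrite /fdk.
rewrite (@sum_exp1D_coef _ y k (d - k).+1 (fun i => k - i)%N
  (fun i => 'C(k, i)%:R * 'C(d - k, i)%:R)); last by move=> i _; apply: leq_subr.
rewrite big_distrr /=; apply: eq_bigr => j _; rewrite mulrA; congr (_ * _).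
rewrite /fcoef mulrC; congr (_ * _).
have -> : (d - j = k + (d - k) - j)%N by lia.
by rewrite -Vandermonde_sub natr_sum; apply: eq_bigr => i _; rewrite !natrM.
Qed.

Lemma fdk_shift_gt1 (y : R) : (0 < k)%N -> (k < d)%N -> 0 < y -> 1 < fdk d k (1 + y).
Proof.
move=> k_gt0 lt_kd y_gt0; rewrite fdk_shift; last exact: ltnW.
rewrite big_ord_recl /= expr0 mulr1 fcoef0 // (bigD1 (Ordinal k_gt0)) //= /bump /= expr1.
have := mulr_gt0 (@fcoef1_gt0 R d k lt_kd k_gt0) y_gt0.
suff : 0 <= \sum_(i < k | i != Ordinal k_gt0) fcoef d k (bump 0 i) * y ^+ bump 0 i by lra.
by apply: sumr_ge0 => i _; rewrite mulr_ge0 ?fcoef_ge0 ?exprn_ge0 // ltW.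
Qed.

Lemma fdk_horner : fdk d k = horner ('C(d, k)%:R^-1 *:
  \sum_(i < (d - k).+1) (('C(k, i)%:R * 'C(d - k, i)%:R) *: 'X^(k - i)) : {poly R}).
Proof.
apply/funext => x; rewrite /fdk hornerZ horner_sum; congr (_ * _).
by apply: eq_bigr => i _; rewrite hornerZ hornerXn.
Qed.

Lemma derive1_fdk (x : R) : derive1 (fdk d k) x =
  'C(d, k)%:R^-1 * \sum_(i < (d - k).+1)
     ('C(k, i)%:R * 'C(d - k, i)%:R * (k - i)%:R * x ^+ (k - i).-1).
Proof.
rewrite fdk_horner -derivE derivZ raddf_sum hornerZ horner_sum; congr (_ * _).
apply: eq_bigr => i _; rewrite /= derivZ derivXn hornerZ hornerMn hornerXn.
by rewrite -[x ^+ _ *+ _]mulr_natl mulrA.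
Qed.

Lemma derive1_fdk_shift (y : R) : (k <= d)%N ->
  derive1 (fdk d k) (1 + y) = \sum_(j < k.+1) j.+1%:R * fcoef d k j.+1 * y ^+ j.
Proof.
move=> le_kd; rewrite derive1_fdk.
rewrite (@sum_exp1D_coef _ y k (d - k).+1 (fun i => (k - i).-1)
  (fun i => 'C(k, i)%:R * 'C(d - k, i)%:R * (k - i)%:R)); last by move=> i _; lia.
rewrite big_distrr /=; apply: eq_bigr => j _; rewrite mulrA; congr (_ * _).
rewrite /fcoef mulrC mulrA; congr (_ * _).
have -> : (d - j.+1 = k + (d - k) - j.+1)%N by lia.
rewrite -Vandermonde_sub natr_sum big_distrr /=.
apply: eq_bigr => i _; rewrite -!natrM; congr (_%:R).
by rewrite -mulnA mul_bin_diag mulnCA mulnA.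
Qed.

Definition fdk_defect (x : R) := (x + 1) * derive1 (fdk d k) x - k%:R * fdk d k x.

Lemma fdk_defect_shift (y : R) : (k < d)%N ->
  fdk_defect (1 + y) = \sum_(j < k.+1)
    (k%:R - j%:R) * (2 * k%:R - d%:R - j%:R) / (d%:R - j%:R) * (fcoef d k j * y ^+ j).
Proof.
move=> lt_kd; have le_kd := ltnW lt_kd.
rewrite /fdk_defect fdk_shift // derive1_fdk_shift //.
rewrite (_ : 1 + y + 1 = y + 2); last by ring.
have shift : y * (\sum_(j < k.+1) j.+1%:R * fcoef d k j.+1 * y ^+ j) =
    \sum_(j < k.+1) j%:R * fcoef d k j * y ^+ j.
  transitivity (\sum_(j < k.+2) j%:R * fcoef d k j * y ^+ j).
    rewrite [RHS]big_ord_recl /= !mul0r add0r big_distrr /=; apply: eq_bigr => j _.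
    by rewrite /bump /= add1n exprS; ring.
  by rewrite big_ord_recr /= fcoef_small // mulr0 mul0r addr0.
rewrite mulrDl shift !big_distrr /= -big_split /= -sumrB; apply: eq_bigr => j _.
have le_jk : (j <= k)%N by rewrite -ltnS.
have rec := @fcoefS R d k lt_kd j le_jk.
have dj_neq0 : (d%:R : R) - j%:R != 0.
  by rewrite subr_eq0 eqr_nat; apply/negP => /eqP e; lia.
have -> : j.+1%:R * fcoef (R := R) d k j.+1 = (k%:R - j%:R) ^+ 2 * fcoef d k j / (d%:R - j%:R).
  by rewrite -rec; field.
by field.
Qed.

End TaylorExpansion.

Lemma partial_sum_sub_mul_le (R : realFieldType) (phi : nat -> R) (T : R) L :
  (forall j, (j < L)%N -> T * phi j <= j.+1%:R * phi j.+1) ->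
  forall j, (j <= L)%N -> \sum_(i < j.+1) (T - i%:R) * phi i <= T * phi j.
Proof.
move=> step; elim=> [|j IH] lt_jL; first by rewrite big_ord_recr big_ord0 /= add0r subr0.
by rewrite big_ord_recr /=; have := IH (ltnW lt_jL); have := step j lt_jL; lra.
Qed.

Lemma sum_sub_mul_le0 (R : realFieldType) (phi : nat -> R) (T : R) N L :
  (L < N)%N -> 0 <= T <= L.+1%:R -> (forall j, (j <= N)%N -> 0 <= phi j) ->
  (forall j, (j <= L)%N -> T * L.+1%:R * phi j <= (L.+1%:R - T) * (j.+1%:R * phi j.+1)) ->
  \sum_(j < N.+1) (T - j%:R) * phi j <= 0.
Proof.
move=> lt_LN /andP[T_ge0 T_le] phi_ge0 step.
have L1_gt0 : (0 : R) < L.+1%:R by [].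
have phiS_ge0 j : (j <= L)%N -> 0 <= j.+1%:R * phi j.+1.
  by move=> le_jL; rewrite mulr_ge0 // phi_ge0 //; lia.
have step_weak j : (j < L)%N -> T * phi j <= j.+1%:R * phi j.+1.
  move=> lt_jL; have stepj := step j (ltnW lt_jL).
  have Tq_ge0 := mulr_ge0 T_ge0 (phiS_ge0 j (ltnW lt_jL)).
  set q := j.+1%:R * phi j.+1 in stepj Tq_ge0 *; rewrite -(ler_pM2l L1_gt0).
  rewrite (_ : L.+1%:R * q = (L.+1%:R - T) * q + T * q); last by ring.
  rewrite (_ : L.+1%:R * (T * phi j) = T * L.+1%:R * phi j); last by ring.
  lra.
have head := @partial_sum_sub_mul_le _ phi T L step_weak L (leqnn L).
have last_step : T * phi L + (T - L.+1%:R) * phi L.+1 <= 0.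
  have stepL := step L (leqnn L); rewrite -(ler_pM2l L1_gt0) mulr0.
  rewrite (_ : L.+1%:R * (T * phi L + (T - L.+1%:R) * phi L.+1) =
    T * L.+1%:R * phi L - (L.+1%:R - T) * (L.+1%:R * phi L.+1)); last by ring.
  by rewrite subr_le0.
rewrite -(big_mkord xpredT (fun j => (T - j%:R) * phi j)).
rewrite (@big_cat_nat _ _ _ L.+1) //=; last by rewrite ltnS ltnW.
rewrite big_mkord big_ltn ?ltnS //=.
have tail : \sum_(L.+2 <= i < N.+1) (T - i%:R) * phi i <= 0.
  rewrite big_seq_cond; apply: sumr_le0 => i; rewrite andbT mem_index_iota => /andP[lo hi].
  apply: mulr_le0_ge0; last by apply: phi_ge0; rewrite -ltnS.
  by rewrite subr_le0 (le_trans T_le) // ler_nat; lia.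
lra.
Qed.

Lemma cubic_ineq_75 {R : realFieldType} (T D : R) : 3 <= T -> 75 * T <= D ->
  D * (D - 1) * (3 * T + 1) <= 2 * (D - 5 * T) * (D - 5 * T - 2) * (2 * T + 1).
Proof.
move=> T_ge3 D_ge.
have D_ge0 : 0 <= D by lra.
have quad : 0 <= (T + 1) * D - (40 * T ^+ 2 + 25 * T + 3) by nra.
have := mulr_ge0 D_ge0 quad; have : 0 <= 10 * T * (2 * T + 1) * (5 * T + 2).
  by rewrite !mulr_ge0 //; lra.
suff -> : 2 * (D - 5 * T) * (D - 5 * T - 2) * (2 * T + 1) = D * (D - 1) * (3 * T + 1)
  + D * ((T + 1) * D - (40 * T ^+ 2 + 25 * T + 3)) + 10 * T * (2 * T + 1) * (5 * T + 2).
  by lra.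
by ring.
Qed.

Lemma shifted_ratio_ineq {R : realFieldType} (T D K y j : R) :
  3 <= T -> 75 * T <= D -> 2 * K = D + T -> 8 * T / D <= y -> 0 <= j <= 3 * T ->
  T * (D - j - 1) * (3 * T + 1) <= y * (K - j) * (K - j - 1) * (2 * T + 1).
Proof.
move=> T_ge3 D_ge KE y_ge /andP[j_ge0 j_le].
have D_gt0 : 0 < D by lra.
have KE' : K = (D + T) / 2 by lra.
have K3T_ge1 : 1 <= K - 3 * T - 1 by rewrite KE'; lra.
have worst_j : (K - 3 * T) * (K - 3 * T - 1) <= (K - j) * (K - j - 1) by nra.
have worst_jE : 8 * T / D * ((K - 3 * T) * (K - 3 * T - 1)) * (2 * T + 1)
    = T / D * (2 * (D - 5 * T) * (D - 5 * T - 2) * (2 * T + 1)).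
  by rewrite KE'; field; exact: lt0r_neq0.
have D_bound : T * (D - j - 1) * (3 * T + 1) <= T / D * (D * (D - 1) * (3 * T + 1)).
  rewrite (_ : T / D * _ = T * (D - 1) * (3 * T + 1)); last by field; exact: lt0r_neq0.
  by rewrite ler_wpM2r ?ler_wpM2l //; lra.
have cubic : T / D * (D * (D - 1) * (3 * T + 1))
    <= T / D * (2 * (D - 5 * T) * (D - 5 * T - 2) * (2 * T + 1)).
  by rewrite ler_wpM2l ?(cubic_ineq_75 _ _ T_ge3) // divr_ge0 //; lra.
have y_worst : 8 * T / D * ((K - 3 * T) * (K - 3 * T - 1)) * (2 * T + 1)
    <= y * ((K - j) * (K - j - 1)) * (2 * T + 1).
  by rewrite ler_wpM2r ?ler_pM ?divr_ge0 ?mulr_ge0 //; lra.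
lra.
Qed.

Section DefectLargeShift.
Context {R : realType}.
Variables (d k t : nat) (y : R).
Hypotheses (lt_kd : (k < d)%N) (kE : (2 * k = d + t)%N).
Hypotheses (t_ge3 : (3 <= t)%N) (t75_le_d : (75 * t <= d)%N).
Hypothesis y_ge : 8 * t%:R / d%:R <= y.

Let y_ge0 : 0 <= y.
Proof. by apply: le_trans y_ge; apply: divr_ge0 => //; apply: mulr_ge0. Qed.

Let phi j := (k%:R - j%:R) / (d%:R - j%:R) * (fcoef d k j * y ^+ j).

Let phi_ge0 j : (j <= k)%N -> 0 <= phi j.
Proof.
move=> le_jk; apply: mulr_ge0; last by rewrite mulr_ge0 ?fcoef_ge0 ?exprn_ge0.
by rewrite divr_ge0 // subr_ge0 ler_nat //; exact: leq_trans (ltnW lt_kd).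
Qed.

Let phiS j : (j < k)%N ->
  j.+1%:R * phi j.+1 * (d%:R - j%:R - 1) = y * (k%:R - j%:R) * (k%:R - j%:R - 1) * phi j.
Proof.
move=> lt_jk; rewrite /phi.
have rec := @fcoefS R d k lt_kd j (ltnW lt_jk).
have j1_lt_d : (j%:R : R) + 1 < d%:R by rewrite natr1 ltr_nat; lia.
have dj_neq0 : (d%:R : R) - j%:R != 0 by apply/lt0r_neq0; lra.
have dj1_neq0 : (d%:R : R) - (j%:R + 1) != 0 by apply/lt0r_neq0; lra.
rewrite -!natr1 in rec *.
have recE : (j%:R + 1) * fcoef (R := R) d k j.+1 = (k%:R - j%:R) ^+ 2 * fcoef d k j / (d%:R - j%:R).
  by rewrite -rec; field.
rewrite exprS.
transitivity ((k%:R - (j%:R + 1)) * ((j%:R + 1) * fcoef d k j.+1) * (y * y ^+ j) *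
  ((d%:R - j%:R - 1) / (d%:R - (j%:R + 1)))); first by field.
rewrite recE (_ : (d%:R - j%:R - 1) / (d%:R - (j%:R + 1)) = 1); first by field.
by rewrite opprD addrA divff // -addrA -opprD.
Qed.

Let phi_step j : (j <= 3 * t)%N ->
  t%:R * (3 * t).+1%:R * phi j <= ((3 * t).+1%:R - t%:R) * (j.+1%:R * phi j.+1).
Proof.
move=> le_j3t.
have lt_jk : (j < k)%N by lia.
have j1_lt_d : (j%:R : R) + 1 < d%:R by rewrite natr1 ltr_nat; lia.
have T_ge3 : (3 : R) <= t%:R by rewrite (ler_nat R 3 t).
have D_ge : 75 * (t%:R : R) <= d%:R by rewrite -(natrM R 75 t) ler_nat.
have KE : 2 * (k%:R : R) = d%:R + t%:R by rewrite -natrM -natrD kE.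
have j_range : 0 <= (j%:R : R) <= 3 * t%:R by rewrite ler0n /= -(natrM R 3 t) ler_nat.
have ineq := ler_wpM2r (phi_ge0 j (ltnW lt_jk)) (shifted_ratio_ineq _ _ _ _ _ T_ge3 D_ge KE y_ge j_range).
rewrite -(@ler_pM2r _ (d%:R - j%:R - 1)); last by lra.
rewrite -[X in _ <= X]mulrA phiS // -natr1 natrM.
by apply: le_trans (le_trans _ ineq) _; rewrite le_eqVlt; apply/orP; left; apply/eqP; ring.
Qed.

Lemma fdk_defect_le0 : fdk_defect d k (1 + y) <= 0.
Proof.
rewrite fdk_defect_shift // (_ : 2 * k%:R - d%:R = t%:R :> R); last first.
  by apply/eqP; rewrite subr_eq -natrM -natrD; apply/eqP; congr (_%:R); lia.
rewrite (eq_bigr (fun j : 'I_k.+1 => (t%:R - j%:R) * phi j)); last by move=> j _; rewrite /phi; ring.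
apply: (@sum_sub_mul_le0 _ phi _ k (3 * t)); first by lia.
- by rewrite ler0n ler_nat; lia.
- exact: phi_ge0.
- exact: phi_step.
Qed.

End DefectLargeShift.

Section ExpBounds.
Context {R : realType}.
Implicit Types T D K y : R.

Lemma expR_ge_poly3 T : 0 <= T -> 1 + T + 5 / 12 * T ^+ 2 + 5 / 54 * T ^+ 3 <= expR T.
Proof.
move=> T_ge0; have T6_ge0 : 0 <= T / 6 by lra.
have pow6 : (1 + T / 6) ^+ 6 <= expR T.
  have -> : expR T = expR (T / 6) ^+ 6 by rewrite -expRM_natl; congr expR; field.
  by apply: lerXn2r; rewrite ?nnegrE ?expR_ge0 ?expR_ge1Dx //; lra.
apply: le_trans pow6.
have := exprn_ge0 4 T6_ge0; have := exprn_ge0 5 T6_ge0; have := exprn_ge0 6 T6_ge0.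
suff -> : (1 + T / 6) ^+ 6 = 1 + T + 5 / 12 * T ^+ 2 + 5 / 54 * T ^+ 3
  + 15 * (T / 6) ^+ 4 + 6 * (T / 6) ^+ 5 + (T / 6) ^+ 6 by lra.
by field.
Qed.

Lemma expR_ge_quadratic T : 0 <= T -> 6 / 5 * T * (T - 1) + 1 <= expR T.
Proof.
move=> T_ge0; apply: le_trans (expR_ge_poly3 T T_ge0).
(* a quadratic with negative discriminant *)
have disc : 0 <= 5 / 54 * T ^+ 2 - 47 / 60 * T + 11 / 5.
  by have := sqr_ge0 (T - 423 / 100); nra.
have := mulr_ge0 T_ge0 disc; nra.
Qed.

Lemma sqr_le_expR3 T : 3 <= T -> 25 * T ^+ 2 <= expR (3 * T).
Proof.
move=> T_ge3; have T_ge0 : 0 <= T by lra.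
have := expR_ge_poly3 T T_ge0; rewrite expRM_natl.
set E := expR T => E_ge.
have E_ge_sqr : 5 / 12 * T ^+ 2 <= E by nra.
have E_ge3 : 31 / 4 <= E by nra.
have E2_ge : 60 <= E ^+ 2 by nra.
have : 60 * (5 / 12 * T ^+ 2) <= E ^+ 2 * E by rewrite ler_pM //; nra.
by rewrite -exprSr; lra.
Qed.

Lemma expR_sixth_le : expR (1 / 6) <= 6 / 5 :> R.
Proof.
have := expR_ge1Dx (- (1 / 6) : R); have := expR_ge0 (1 / 6 : R).
have := expRxMexpNx_1 (1 / 6 : R); nra.
Qed.

Lemma shift_exponent_le K D T y : 0 < T -> 25 * T ^+ 2 <= D -> 75 * T <= D ->
  2 * K = D + T -> 0 <= y -> y <= 8 * T / D -> K ^+ 2 * y / D <= 2 * T + 1 / 6.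
Proof.
move=> T_gt0 D_ge_sqr D_ge KE y_ge0 y_le.
have D_gt0 : 0 < D by lra.
have y_max : K ^+ 2 * y / D <= K ^+ 2 * (8 * T / D) / D.
  by rewrite ler_wpM2r ?invr_ge0 ?ler_wpM2l ?sqr_ge0 //; lra.
apply: le_trans y_max _.
have -> : K ^+ 2 * (8 * T / D) / D = 2 * T + 4 * (T ^+ 2 / D) + 2 * (T ^+ 2 / D) * (T / D).
  by rewrite (_ : K = (D + T) / 2); [field; exact: lt0r_neq0 | lra].
have : T ^+ 2 / D <= 1 / 25 by rewrite ler_pdivrMr //; lra.
have : T / D <= 1 / 75 by rewrite ler_pdivrMr //; lra.
have := divr_ge0 (sqr_ge0 T) (ltW D_gt0); have := divr_ge0 (ltW T_gt0) (ltW D_gt0).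
nra.
Qed.

Lemma small_shift_bound K D T y : 3 <= T -> expR (3 * T) <= D -> 2 * K = D + T ->
  0 <= y -> y <= 8 * T / D -> T * (T - 1) * expR (K ^+ 2 * y / D) < D - T.
Proof.
move=> T_ge3 D_ge KE y_ge0 y_le; have T_ge0 : 0 <= T by lra.
have D_ge_sqr : 25 * T ^+ 2 <= D := le_trans (sqr_le_expR3 T T_ge3) D_ge.
have exp_le : expR (K ^+ 2 * y / D) <= 6 / 5 * expR T ^+ 2.
  apply: le_trans (_ : expR (2 * T + 1 / 6) <= _).
    by rewrite ler_expR shift_exponent_le //; nra.
  by rewrite expRD expRM_natl mulrC ler_wpM2r ?exprn_ge0 ?expR_ge0 ?expR_sixth_le.
have TT1_ge0 : 0 <= T * (T - 1) by nra.
apply: le_lt_trans (ler_wpM2l TT1_ge0 exp_le) _.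
move: D_ge; rewrite expRM_natl; set E := expR T => D_ge.
have E_ge := expR_ge_quadratic T T_ge0; rewrite -/E in E_ge.
have E_gt : T < E ^+ 2 by have := expR_ge1Dx T; rewrite -/E; nra.
have : E ^+ 2 * (6 / 5 * T * (T - 1) + 1) <= E ^+ 2 * E by rewrite ler_wpM2l ?sqr_ge0.
by rewrite -exprSr; nra.
Qed.

End ExpBounds.

Section ExpMajorant.
Context {R : realType}.
Variables d k : nat.
Hypothesis lt_kd : (k < d)%N.

Lemma bin_ratio_le j : (j <= k)%N ->
  'C(d - j, d - k)%:R / 'C(d, k)%:R <= (k%:R / d%:R) ^+ j :> R.
Proof.
have d_gt0 : (0 : R) < d%:R by rewrite ltr0n; lia.
have C_neq0 : ('C(d, k)%:R : R) != 0 by rewrite pnatr_eq0 -lt0n bin_gt0 ltnW.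
elim: j => [|j IH] lt_jk; first by rewrite subn0 bin_sub ?divff // ltnW.
have down := mul_bin_down (d - j) (d - k).
have e : (d - j - (d - k) = k - j)%N by lia.
rewrite e (_ : d - j.+1 = (d - j).-1)%N in down *; last by lia.
have dj_neq0 : ((d - j)%:R : R) != 0 by rewrite pnatr_eq0; lia.
have -> : ('C((d - j).-1, d - k)%:R : R) = (k - j)%:R / (d - j)%:R * 'C(d - j, d - k)%:R.
  by apply: (mulfI dj_neq0); rewrite -natrM down natrM; field.
rewrite -mulrA exprS ler_pM ?divr_ge0 ?IH //; last exact: ltnW.
rewrite natrB ?natrB //; [|lia|lia].
rewrite ler_pdivrMr; last by rewrite subr_gt0 ltr_nat; lia.
rewrite mulrAC ler_pdivlMr //.
have : (j%:R : R) * k%:R <= j%:R * d%:R by rewrite ler_wpM2l // ler_nat ltnW.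
lra.
Qed.

Lemma fdk_shift_le_expR (y : R) : 0 <= y -> fdk d k (1 + y) <= expR (k%:R ^+ 2 * y / d%:R).
Proof.
move=> y_ge0; rewrite fdk_shift; last exact: ltnW.
apply: (@le_trans _ _ (\sum_(j < k.+1) 'C(k, j)%:R * (k%:R / d%:R) ^+ j * y ^+ j)).
  apply: ler_sum => j _; rewrite ler_wpM2r ?exprn_ge0 // /fcoef natrM -mulrA.
  by rewrite ler_wpM2l // bin_ratio_le // -ltnS.
have -> : \sum_(j < k.+1) 'C(k, j)%:R * (k%:R / d%:R) ^+ j * y ^+ j = (k%:R * y / d%:R + 1) ^+ k.
  rewrite exprD1n; apply: eq_bigr => j _.
  by rewrite -mulr_natl -mulrA -exprMn mulr1 mulr_natl mulrAC.
apply: (@le_trans _ _ (expR (k%:R * y / d%:R) ^+ k)).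
  have ky_ge0 : 0 <= k%:R * y / d%:R by rewrite divr_ge0 ?mulr_ge0.
  apply: lerXn2r; rewrite ?nnegrE ?expR_ge0 //; first lra.
  by rewrite addrC expR_ge1Dx.
by rewrite -expRM_natl expr2 !mulrA.
Qed.

End ExpMajorant.

Lemma shifted_weight_le {R : realFieldType} (K D T n : R) :
  1 < K -> K < D -> 1 <= T -> 1 <= n <= K -> (K - n) * (T - n) / (D - n) <= K * (T - 1) / D.
Proof.
move=> K_gt1 lt_KD T_ge1 /andP[n_ge1 n_le].
rewrite ler_pdivrMr; last lra.
rewrite mulrAC ler_pdivlMr; last lra.
set G := (T - 1) * K * (D - n) - D * (K - n) * (T - n).
have GE : (K - 1) * G = (K - n) * ((T - 1) * (D - K)) + (n - 1) * ((T - 1) * K * (D - K))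
   + D * (K - 1) * ((n - 1) * (K - n)) by rewrite /G; ring.
have : 0 <= (K - 1) * G by rewrite GE !addr_ge0 // !mulr_ge0 //; lra.
by rewrite pmulr_rge0 /G; lra.
Qed.

Lemma fdk_defect_le {R : realType} (d k : nat) (y : R) :
  (1 < k)%N -> (k < d)%N -> 0 <= y -> 1 <= 2 * k%:R - d%:R :> R ->
  fdk_defect d k (1 + y) <= k%:R / d%:R * ((2 * k%:R - d%:R - 1) * fdk d k (1 + y) + 1).
Proof.
move=> k_gt1 lt_kd y_ge0 T_ge1; rewrite fdk_defect_shift // fdk_shift; last exact: ltnW.
rewrite !big_ord_recl /= expr0 mulr1 fcoef0 // subr0 !subr0.
set S := \sum_(i < k) fcoef d k (bump 0 i) * y ^+ bump 0 i.
have d_gt0 : (0 : R) < d%:R by rewrite ltr0n; lia.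
have : \sum_(i < k) (k%:R - (bump 0 i)%:R) * (2 * k%:R - d%:R - (bump 0 i)%:R)
    / (d%:R - (bump 0 i)%:R) * (fcoef d k (bump 0 i) * y ^+ bump 0 i)
  <= k%:R * (2 * k%:R - d%:R - 1) / d%:R * S.
  rewrite /S big_distrr /=; apply: ler_sum => j _.
  rewrite ler_wpM2r ?mulr_ge0 ?fcoef_ge0 ?exprn_ge0 // /bump /= add1n.
  apply: shifted_weight_le => //; first by rewrite ltr1n.
    by rewrite ltr_nat.
  by rewrite ler1n ler_nat ltn_ord.
move: T_ge1; set K : R := k%:R; set D : R := d%:R; set T := 2 * K - D => T_ge1 sum_le.
suff -> : K / D * ((T - 1) * (1 + S) + 1) = K * T / D * 1 + K * (T - 1) / D * S by lra.
by field; exact: lt0r_neq0.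
Qed.

Lemma defect_mul_sqrt_lt {R : rcfType} (D K T f G : R) :
  2 * K = D + T -> 1 <= T -> 0 < K -> 0 < D -> 1 < f -> T * (T - 1) * f < D - T ->
  0 <= G <= K / D * ((T - 1) * f + 1) ->
  G * (D - K + Num.sqrt ((D - K) ^+ 2 + D * T * f)) < K * T * f.
Proof.
move=> KE T_ge1 K_gt0 D_gt0 f_gt1 Tf_lt /andP[G_ge0 G_le].
have sqrt_le : Num.sqrt ((D - K) ^+ 2 + D * T * f) <= T * f + (D - K).
  rewrite -(@ger0_norm _ (T * f + (D - K))); last by nra.
  rewrite -sqrtr_sqr ler_sqrt ?sqr_ge0 //.
  have : 0 <= T ^+ 2 * f * (f - 1) by rewrite !mulr_ge0 ?sqr_ge0 //; lra.
  suff -> : (T * f + (D - K)) ^+ 2 = (D - K) ^+ 2 + D * T * f + T ^+ 2 * f * (f - 1) by lra.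
  by rewrite (_ : K = (D + T) / 2); [field | lra].
have : G * (D - K + Num.sqrt ((D - K) ^+ 2 + D * T * f)) <= G * (T * f + D - T).
  by rewrite ler_wpM2l //; lra.
have : G * (T * f + D - T) <= K / D * ((T - 1) * f + 1) * (T * f + D - T).
  by rewrite ler_wpM2r //; nra.
have : 0 < (f - 1) * ((D - T) - T * (T - 1) * f) by rewrite mulr_gt0 //; lra.
have KD_gt0 : 0 < K / D by rewrite divr_gt0.
rewrite -(ltr_pM2l KD_gt0) mulr0.
suff -> : K * T * f = K / D * ((T - 1) * f + 1) * (T * f + D - T)
  + K / D * ((f - 1) * (D - T - T * (T - 1) * f)) by lra.
by field; exact: lt0r_neq0.
Qed.

Lemma ltr_div_of_defect {R : realFieldType} (a f K T Q : R) : 0 < K -> 0 < Q ->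
  (a - K * f) * Q < K * T * f -> a / K < (1 + T / Q) * f.
Proof.
move=> K_gt0 Q_gt0; rewrite -ltr_pdivlMr // => lt_KTf.
rewrite ltr_pdivrMr // (_ : (1 + T / Q) * f * K = K * f + K * T * f / Q); first lra.
by field; exact: lt0r_neq0.
Qed.

Lemma fdk_defect_mul_lt {R : realType} (d k t : nat) (y : R) :
  (k < d)%N -> (2 * k = d + t)%N -> (3 <= t)%N -> expR (3 * t%:R) <= d%:R :> R -> 0 < y ->
  fdk_defect d k (1 + y) *
    (d%:R - k%:R + Num.sqrt ((d%:R - k%:R) ^+ 2 + d%:R * t%:R * fdk d k (1 + y)))
  < k%:R * t%:R * fdk d k (1 + y).
Proof.
move=> lt_kd kE t_ge3 exp3t y_gt0.
have t_ge3R : (3 : R) <= t%:R by rewrite (ler_nat R 3 t).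
have KE : 2 * k%:R = d%:R + t%:R :> R by rewrite -natrM -natrD kE.
have t75 : (75 * t <= d)%N.
  by rewrite -(ler_nat R) natrM; have := le_trans (sqr_le_expR3 _ t_ge3R) exp3t; nra.
have k_gt1 : (1 < k)%N by lia.
have f_gt1 := @fdk_shift_gt1 R d k y (ltnW k_gt1) lt_kd y_gt0.
set f := fdk d k (1 + y) in f_gt1 *.
have [G_le0|G_gt0] := lerP (fdk_defect d k (1 + y)) 0.
  apply: le_lt_trans (mulr_le0_ge0 G_le0 _) _.
    by rewrite addr_ge0 ?sqrtr_ge0 // subr_ge0 ler_nat ltnW.
  by apply: mulr_gt0; [apply: mulr_gt0; rewrite ltr0n; lia | exact: lt_trans ltr01 f_gt1].
have y_lt : y < 8 * t%:R / d%:R.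
  by rewrite ltNge; apply/negP => /(@fdk_defect_le0 R d k t y lt_kd kE t_ge3 t75); lra.
apply: defect_mul_sqrt_lt => //; [lra | rewrite ltr0n; lia | rewrite ltr0n; lia | |].
  apply: le_lt_trans (small_shift_bound _ _ _ _ t_ge3R exp3t KE (ltW y_gt0) (ltW y_lt)).
  by rewrite ler_wpM2l ?fdk_shift_le_expR //; [nra | exact: ltW].
rewrite (ltW G_gt0) /=.
have := @fdk_defect_le R d k y k_gt1 lt_kd (ltW y_gt0); rewrite KE addrAC subrr add0r -/f.
by apply; lra.
Qed.

Theorem lemma19 (R : realType) (d k : nat) :
  (404 <= d)%N ->
  d%:R / 2 + 1 < (k%:R : R) ->
  (k%:R : R) <= d%:R / 2 + ln (d%:R : R) / 6 ->
  forall x : R, 1 < x ->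
    (x + 1) * derive1 (fdk d k) x / k%:R < (1 + etadk d k x) * fdk d k x.
Proof.
move=> d_ge k_gt k_le x x_gt1.
have d_gt0 : (0 : R) < d%:R by rewrite ltr0n; lia.
have ln_le : ln (d%:R : R) <= d%:R - 1.
  by have := expR_ge1Dx (ln (d%:R : R)); rewrite lnK ?posrE //; lra.
have lt_kd : (k < d)%N by rewrite -(ltr_nat R); lra.
have lt_d2_2k : (d + 2 < 2 * k)%N by rewrite -(ltr_nat R (d + 2)) natrD natrM; lra.
have [t kE] : exists t, (2 * k = d + t)%N by exists (2 * k - d)%N; lia.
have tE : 2 * k%:R - d%:R = t%:R :> R by apply/eqP; rewrite subr_eq -natrM -natrD addnC kE.
have t_ge3 : (3 <= t)%N by lia.
have exp3t : expR (3 * t%:R) <= d%:R :> R.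
  by rewrite -[X in _ <= X]lnK ?posrE // ler_expR -tE; lra.
have -> : x = 1 + (x - 1) by rewrite addrC subrK.
rewrite /etadk tE; apply: ltr_div_of_defect; first by lra.
  by rewrite ltr_pwDl ?sqrtr_ge0 // subr_gt0 ltr_nat.
by apply: fdk_defect_mul_lt => //; rewrite subr_gt0.
Qed.
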